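(* Let $H=\{\underline z\in\mathbb{C}^3: z_1+z_2+z_3=0\}$ and $p(Z)=Z^3$. If $\underline z\in H$ is not a complex scalar multiple of a vector with real entries, then $W_p^{\circ n}(\underline z)$ is defined for all $n\ge0$ and converges to the zero vector; the convergence is linear with rate $2/3$, i.e. $W_p^{\circ n}(\underline z)\neq 0$ for all $n$ and $\|W_p^{\circ(n+1)}(\underline z)\|/\|W_p^{\circ n}(\underline z)\|\to 2/3$ (for any norm on $\mathbb{C}^3$).
   Context: For a monic polynomial $p\in\mathbb{C}[Z]$ of degree $d$, the Weierstrass map $W_p$ is the partially defined map $\mathbb{C}^d\setminus\Delta\to\mathbb{C}^d$, $\underline z\mapsto \underline z'$ with $z'_k=z_k-\dfrac{p(z_k)}{\prod_{j\ne k}(z_k-z_j)}$, where $\Delta=\{\underline z\in\mathbb{C}^d: z_j=z_k\text{ for some }j<k\}$. *)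

From HB Require Import structures.
From mathcomp Require Import all_boot all_order all_algebra.
From mathcomp Require Import complex.
From mathcomp Require Import reals.
Set Implicit Arguments. Unset Strict Implicit. Unset Printing Implicit Defensive.
Import Order.TTheory GRing.Theory Num.Theory.
Local Open Scope ring_scope.

(* Vectors of C^d are row vectors 'rV[F]_d, coordinates z 0 k, k : 'I_d. *)

Definition off_diagonal (F : fieldType) (d : nat) (z : 'rV[F]_d) : bool :=
  [forall j : 'I_d, forall k : 'I_d, (j != k) ==> (z 0 j != z 0 k)].

Definition weierstrass (F : fieldType) (d : nat) (p : {poly F})
    (z : 'rV[F]_d) : option 'rV[F]_d :=
  if off_diagonal z then
    Some (\row_(k < d) (z 0 k - p.[z 0 k] / \prod_(j < d | j != k) (z 0 k - z 0 j)))
  else None.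

Fixpoint weierstrass_iter (F : fieldType) (d : nat) (p : {poly F}) (n : nat)
    (z : 'rV[F]_d) : option 'rV[F]_d :=
  match n with
  | 0 => Some z
  | n'.+1 => match weierstrass_iter p n' z with
             | Some w => weierstrass p w
             | None => None
             end
  end.

Definition cmod (R : rcfType) (a : R[i]) : R := complex.Re `|a|.

Definition is_norm (R : rcfType) (d : nat) (N : 'rV[R[i]]_d -> R) : Prop :=
  [/\ forall v, N v = 0 -> v = 0,
      forall (a : R[i]) v, N (a *: v) = cmod a * N v
    & forall v w, N (v + w) <= N v + N w].

Definition seq_cvg (R : realType) (u : nat -> R) (l : R) : Prop :=
  forall eps : R, 0 < eps -> exists N : nat, forall n : nat, (N <= n)%N -> `|u n - l| < eps.

From HB Require Import structures.
From mathcomp Require Import all_boot all_order all_algebra.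
From mathcomp Require Import complex reals ring lra.
From mathcomp Require Import all_classical all_analysis.
Import Order.TTheory GRing.Theory Num.Theory.
Import numFieldNormedType.Exports.
Local Open Scope ring_scope.
Local Open Scope classical_set_scope.
Set Implicit Arguments. Unset Strict Implicit. Unset Printing Implicit Defensive.

(* Fix a primitive cube root of unity w and write z in H as
   z_k = u w^k + v w^(2k) (cubic_vec w u v).  In these coordinates one
   Weierstrass step is explicit (weierstrass_cubic_vec): whenever u^3 <> v^3 it
   maps (u, v) to (u * wfactor u v, v * wfactor v u).  With t = v/u and s = t^3
   it multiplies u by (2 - s)/(3(1 - s)) and t by the Blaschke factor
   (1 - 2s)/(2 - s), which contracts the unit disc (blaschke_bound).  So if
   |v| < |u| the ratio tends to 0 geometrically, every step is defined, the
   normalised point tends to cubic_vec w 1 0, and consecutive norms have ratio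
   tending to 2/3 (orbit_conclusion).  Replacing w by w^2 exchanges u and v, and
   |u| = |v| forces z to be a complex multiple of a real vector
   (cubic_vec_real_multiple), which yields the theorem. *)

Definition cubic_coord (F : fieldType) (w u v : F) (n : nat) : F :=
  u * w ^+ n + v * w ^+ (2 * n).

Definition cubic_vec (F : fieldType) (w u v : F) : 'rV[F]_3 :=
  \row_(k < 3) cubic_coord w u v k.

(* The factor by which one Weierstrass step multiplies the coordinate u. *)
Definition wfactor (F : fieldType) (u v : F) : F :=
  (2 * u ^+ 3 - v ^+ 3) / (3 * (u ^+ 3 - v ^+ 3)).

Definition wstep (F : fieldType) (p : F * F) : F * F :=
  (p.1 * wfactor p.1 p.2, p.2 * wfactor p.2 p.1).

Lemma ord3_nat n (h : (n < 3)%N) : Ordinal h = n%:R :> 'I_3.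
Proof. by apply/val_inj; case: n h => [|[|[|]]]. Qed.

Lemma prod_ord3 (F : fieldType) (f : 'I_3 -> F) :
  [/\ \prod_(j < 3 | j != 0) f j = f 1 * f 2,
      \prod_(j < 3 | j != 1) f j = f 0 * f 2 &
      \prod_(j < 3 | j != 2) f j = f 0 * f 1].
Proof.
have e1 : lift ord0 ord0 = 1 :> 'I_3 by apply/val_inj.
have e2 : lift ord0 (lift ord0 ord0) = 2 :> 'I_3 by apply/val_inj.
by split; rewrite big_mkcond !big_ord_recl big_ord0 /= ?e1 ?e2 ?(mul1r, mulr1).
Qed.

Lemma off_diagonal3 (F : fieldType) (z : 'rV[F]_3) :
  z 0 0 != z 0 1 -> z 0 0 != z 0 2 -> z 0 1 != z 0 2 -> off_diagonal z.
Proof.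
move=> n01 n02 n12; apply/forallP => j; apply/forallP => k; apply/implyP.
case: j => [[|[|[|j]]] hj] //; case: k => [[|[|[|k]]] hk] //;
  by rewrite !ord3_nat => _ //; rewrite eq_sym.
Qed.

Section CubeRoot.
Variables (F : fieldType) (w : F).
Hypothesis hw : w ^+ 2 + w + 1 = 0.
Hypothesis h3 : (3 : F) != 0.

Lemma cube_root1 : w ^+ 3 = 1.
Proof.
have e : w ^+ 3 - 1 = (w - 1) * (w ^+ 2 + w + 1) by ring.
by apply/eqP; rewrite -subr_eq0 e hw mulr0.
Qed.

Lemma expr3S n : w ^+ n.+3 = w ^+ n.
Proof. by rewrite -addn3 exprD cube_root1 mulr1. Qed.

Lemma cube_root_sqr : (w ^+ 2) ^+ 2 + w ^+ 2 + 1 = 0.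
Proof. by rewrite -exprM -multE /= expr3S expr1 -hw; ring. Qed.

Lemma cube_rotate (a : F) k : (a * w ^+ k) ^+ 3 = a ^+ 3.
Proof. by rewrite exprMn -exprM mulnC exprM cube_root1 expr1n mulr1. Qed.

Lemma cubic_coord_periodic u v n : cubic_coord w u v (n + 3) = cubic_coord w u v n.
Proof.
have w6 : w ^+ (2 * 3) = 1 by rewrite mulnC exprM cube_root1 expr1n.
by rewrite /cubic_coord mulnDr !exprD w6 cube_root1 !mulr1.
Qed.

Lemma cubic_coord_shift u v k m :
  cubic_coord w (u * w ^+ k) (v * w ^+ (2 * k)) m = cubic_coord w u v (k + m).
Proof. by rewrite /cubic_coord mulnDr !exprD !mulrA. Qed.

Lemma cubic_coord_rotate (u v : F) k :
  let z := cubic_coord w u v in let c := cubic_coord w (u * w ^+ k) (v * w ^+ (2 * k)) in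
  [/\ z k = c 0%N, z k.+1 = c 1%N & z k.+2 = c 2%N].
Proof. by rewrite /= !cubic_coord_shift addn0 addn1 addn2. Qed.

(* The denominator of the Weierstrass correction at the coordinate a + b. *)
Lemma cubic_coord_diffs a b :
  (cubic_coord w a b 0 - cubic_coord w a b 1) * (cubic_coord w a b 0 - cubic_coord w a b 2%N)
    = 3 * (a ^+ 2 + a * b + b ^+ 2).
Proof.
have e1 : (1 - w) * (1 - w ^+ 2) = 3.
  have -> : (1 - w) * (1 - w ^+ 2) = 3 - (w ^+ 2 + w + 1) + (w ^+ 3 - 1) by ring.
  by rewrite hw cube_root1; ring.
have e2 : (1 - w) ^+ 2 + (1 - w ^+ 2) ^+ 2 = 3.
  have -> : (1 - w) ^+ 2 + (1 - w ^+ 2) ^+ 2 = 3 - (w ^+ 2 + w + 1) + w * (w ^+ 3 - 1)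
    by ring.
  by rewrite hw cube_root1; ring.
have w4 : w ^+ (2 * 2) = w by rewrite (exprS w 3) cube_root1 mulr1.
rewrite /cubic_coord w4 !expr0 !mulr1 !expr1.
transitivity (a ^+ 2 * ((1 - w) * (1 - w ^+ 2))
   + a * b * ((1 - w) ^+ 2 + (1 - w ^+ 2) ^+ 2) + b ^+ 2 * ((1 - w) * (1 - w ^+ 2))).
  by ring.
by rewrite e1 e2; ring.
Qed.

Lemma wfactor_cubes (a b a' b' : F) :
  a ^+ 3 = a' ^+ 3 -> b ^+ 3 = b' ^+ 3 -> wfactor a b = wfactor a' b'.
Proof. by rewrite /wfactor => -> ->. Qed.

Lemma sqr_sum_neq0 (a b : F) : a ^+ 3 != b ^+ 3 -> a ^+ 2 + a * b + b ^+ 2 != 0.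
Proof.
have e : a ^+ 3 - b ^+ 3 = (a - b) * (a ^+ 2 + a * b + b ^+ 2) by ring.
by apply: contraNneq => h; rewrite -subr_eq0 e h mulr0.
Qed.

Lemma newton_cubic_coord (a b : F) : a ^+ 3 != b ^+ 3 ->
  let z := cubic_coord w a b in
  z 0%N - z 0%N ^+ 3 / ((z 0%N - z 1%N) * (z 0%N - z 2%N)) =
    cubic_coord w (a * wfactor a b) (b * wfactor b a) 0.
Proof.
move=> hab /=; rewrite cubic_coord_diffs /cubic_coord /wfactor /= !expr0 !mulr1.
by field; rewrite h3 sqr_sum_neq0 // !subr_eq0 hab eq_sym hab.
Qed.

(* The same correction at an arbitrary coordinate k, by rotation. *)
Lemma cubic_coord_newton (u v : F) k : u ^+ 3 != v ^+ 3 ->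
  let z := cubic_coord w u v in
  z k - z k ^+ 3 / ((z k - z k.+1) * (z k - z k.+2))
    = cubic_coord w (u * wfactor u v) (v * wfactor v u) k.
Proof.
move=> huv /=; have [-> -> ->] := cubic_coord_rotate u v k.
rewrite newton_cubic_coord ?cube_rotate //.
by rewrite !(wfactor_cubes (cube_rotate _ _) (cube_rotate _ _)) /cubic_coord; ring.
Qed.

Lemma cubic_coord_diffs_neq0 (u v : F) k : u ^+ 3 != v ^+ 3 ->
  let z := cubic_coord w u v in
  (z k - z k.+1) * (z k - z k.+2) != 0.
Proof.
move=> huv /=; have [-> -> ->] := cubic_coord_rotate u v k.
by rewrite cubic_coord_diffs mulf_neq0 // sqr_sum_neq0 // !cube_rotate.
Qed.

Lemma weierstrass_cubic_vec (u v : F) : u ^+ 3 != v ^+ 3 ->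
  weierstrass ('X^3 : {poly F}) (cubic_vec w u v) =
    Some (cubic_vec w (u * wfactor u v) (v * wfactor v u)).
Proof.
move=> huv; set z := cubic_coord w u v.
have z3 : z 3%N = z 0%N := cubic_coord_periodic u v 0.
have z4 : z 4%N = z 1%N := cubic_coord_periodic u v 1.
have d0 := cubic_coord_diffs_neq0 0 huv; have d1 := cubic_coord_diffs_neq0 1 huv.
have n0 := cubic_coord_newton 0 huv; have n1 := cubic_coord_newton 1 huv.
have n2 := cubic_coord_newton 2 huv.
rewrite /= -/z ?z3 ?z4 in d0 d1 n0 n1 n2.
have zE (k : 'I_3) : cubic_vec w u v 0 k = z k by rewrite mxE.
rewrite /weierstrass off_diagonal3; last first.
- by move: d1; rewrite !zE mulf_eq0 negb_or !subr_eq0 => /andP[].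
- by move: d0; rewrite !zE mulf_eq0 negb_or !subr_eq0 => /andP[].
- by move: d0; rewrite !zE mulf_eq0 negb_or !subr_eq0 => /andP[].
congr Some; apply/rowP => k; rewrite !mxE hornerXn -/z.
have [p0 p1 p2] := prod_ord3 (fun j => z k - cubic_vec w u v 0 j).
case: k p0 p1 p2 => [[|[|[|k]]] hk] //; rewrite !ord3_nat /= => p0 p1 p2.
- by rewrite p0 !zE; exact: n0.
- by rewrite p1 !zE [X in _ / X]mulrC; exact: n1.
- by rewrite p2 !zE; exact: n2.
Qed.

(* Every point of H has coordinates (u, v) (discrete Fourier inversion). *)
Lemma cubic_vec_decomp (z : 'rV[F]_3) : z 0 0 + z 0 1 + z 0 2 = 0 ->
  z = cubic_vec w ((z 0 0 + z 0 1 * w ^+ 2 + z 0 2 * w) / 3)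
                  ((z 0 0 + z 0 1 * w + z 0 2 * w ^+ 2) / 3).
Proof.
move=> hz; apply/rowP => k; rewrite mxE /cubic_coord; apply: (mulfI h3).
have z2 : z 0 2 = - z 0 0 - z 0 1.
  by apply/eqP; rewrite -subr_eq0 -hz; apply/eqP; ring.
have w2 : w ^+ 2 = - w - 1.
  by apply/eqP; rewrite -subr_eq0 -hw; apply/eqP; ring.
transitivity (z 0 0 * (w ^+ k + w ^+ (2 * k)) + z 0 1 * (w ^+ (k + 2) + w ^+ (2 * k + 1))
              + z 0 2 * (w ^+ (k + 1) + w ^+ (2 * k + 2))); last first.
  by rewrite !exprD; field.
case: k => [[|[|[|k]]] hk] //=; rewrite -!plusE -!multE /= ?expr3S ?ord3_nat z2 w2;
  ring.
Qed.

(* u can be read off the point, so a vanishing point has u = 0. *)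
Lemma cubic_vec_eq0 (u v : F) : cubic_vec w u v = 0 -> u = 0.
Proof.
have e : cubic_vec w u v 0 0 + cubic_vec w u v 0 1 * w ^+ 2 + cubic_vec w u v 0 2 * w
           = 3 * u + v * (w ^+ 2 + w + 1).
  rewrite !mxE /cubic_coord -!multE /=.
  transitivity (u * (1 + w ^+ 3 + w ^+ 3) + v * (1 + w ^+ 3 * w + w ^+ 3 * w ^+ 2)).
    by ring.
  by rewrite cube_root1; ring.
move=> h0; move: e; rewrite h0 hw !mxE; move/eqP.
by rewrite !mul0r mulr0 !addr0 eq_sym mulf_eq0 (negbTE h3) => /eqP.
Qed.

Lemma cubic_vec_swap (u v : F) : cubic_vec w u v = cubic_vec (w ^+ 2) v u.
Proof.
have w4 : w ^+ 2 ^+ 2 = w by rewrite -exprM -multE /= expr3S expr1.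
by apply/rowP => k; rewrite !mxE /cubic_coord [w ^+ 2 ^+ (2 * k)]exprM w4 -exprM addrC.
Qed.

End CubeRoot.

Lemma cubic_vec_scale (F : fieldType) (w a u v : F) :
  cubic_vec w (a * u) (a * v) = a *: cubic_vec w u v.
Proof. by apply/rowP => k; rewrite !mxE /cubic_coord; ring. Qed.

Lemma cubic_vec_sub (F : fieldType) (w u v u' v' : F) :
  cubic_vec w u v - cubic_vec w u' v' = cubic_vec w (u - u') (v - v').
Proof. by apply/rowP => k; rewrite !mxE /cubic_coord; ring. Qed.

Lemma wstep_ratio (F : fieldType) (u v : F) : (3 : F) != 0 -> u != 0 ->
  let s := (v / u) ^+ 3 in s != 1 -> s != 2 ->
  wfactor u v = (2 - s) / (3 * (1 - s)) /\
  (wstep (u, v)).2 / (wstep (u, v)).1 = v / u * ((1 - 2 * s) / (2 - s)).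
Proof.
move=> h3 u0 s s1 s2.
have v3 : v ^+ 3 = s * u ^+ 3 by rewrite /s expr_div_n divfK ?expf_neq0.
have e1 : 1 - s != 0 by rewrite subr_eq0 eq_sym.
have e2 : 2 - s != 0 by rewrite subr_eq0 eq_sym.
have f1 : u ^+ 3 - s * u ^+ 3 = (1 - s) * u ^+ 3 by ring.
have f2 : s * u ^+ 3 - u ^+ 3 = - ((1 - s) * u ^+ 3) by ring.
have f3 : 2 * u ^+ 3 - s * u ^+ 3 = (2 - s) * u ^+ 3 by ring.
rewrite /wstep /wfactor /= v3 f1 f2 f3.
by split; field; rewrite ?oppr_eq0 ?mulf_neq0 ?h3 ?e1 ?e2 ?u0.
Qed.

Section RealSequences.
Variable R : realType.
Implicit Types (x r : nat -> R) (l : R).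

Lemma seq_cvgP x l : seq_cvg x l <-> x @ \oo --> l.
Proof.
rewrite cvgrPdist_lt; split => [H e e0|H e e0].
  by have [N HN] := H e e0; exists N => // n /= Nn; rewrite distrC; exact: HN.
by have [N _ HN] := H e e0; exists N => n Nn; rewrite distrC; exact: HN.
Qed.

Lemma cvg_dominated x r l (M : R) :
  (forall n, `|x n - l| <= M * r n) -> r @ \oo --> 0 -> x @ \oo --> l.
Proof.
move=> hx r0.
have lim s : (fun n => l + s * (M * r n)) @ \oo --> l.
  by rewrite -[X in _ --> X]addr0 -(mulr0 (s * M)); apply: cvgD;
    [exact: cvg_cst | under eq_fun do rewrite mulrA; exact: cvgMl_tmp].
apply: (squeeze_cvgr _ (lim (-1)) (lim 1)); near=> n.
by have := hx n; rewrite ler_norml mulN1r mul1r => /andP[h1 h2]; apply/andP; split; lra.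
Unshelve. all: by end_near. Qed.

Lemma geometric_decay x (q : R) N : 0 < q -> q < 1 -> (forall n, 0 <= x n) ->
  (forall n, (N <= n)%N -> x n.+1 <= q * x n) -> x @ \oo --> 0.
Proof.
move=> q0 q1 x0 hx.
have bound m : x (m + N)%N <= x N / q ^+ N * q ^+ (m + N).
  rewrite exprD mulrCA divfK ?expf_neq0 ?gt_eqF //.
  elim: m => [|m IH]; first by rewrite mul1r.
  by rewrite addSn exprS -mulrA; apply: le_trans (hx _ (leq_addl _ _)) _; rewrite ler_pM2l.
have geo : (fun n => x N / q ^+ N * q ^+ n) @ \oo --> 0.
  by rewrite -(mulr0 (x N / q ^+ N)); apply: cvgMl_tmp; apply: cvg_expr; rewrite gtr0_norm.
apply: (squeeze_cvgr _ (cvg_cst 0) geo); near=> n.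
by rewrite x0 /= -(subnK (_ : (N <= n)%N)) ?bound //; near: n; exact: nbhs_infty_ge.
Unshelve. all: by end_near. Qed.

End RealSequences.

Section ComplexModulus.
Variable R : realType.
Local Notation C := R[i].
Implicit Types a b : C.

Lemma cmodC a : ((cmod a)%:C)%C = `|a|.
Proof. by rewrite /cmod normc_def. Qed.

Lemma cmod_ge0 a : 0 <= cmod a.
Proof. by rewrite /cmod normc_def /= sqrtr_ge0. Qed.

Lemma cmod_eq0 a : (cmod a == 0) = (a == 0).
Proof. by rewrite -(inj_eq (@complexI R)) cmodC normr_eq0. Qed.

Lemma cmodM a b : cmod (a * b) = cmod a * cmod b.
Proof. by apply: (@complexI R); rewrite rmorphM /= !cmodC normrM. Qed.

Lemma cmodV a : cmod a^-1 = (cmod a)^-1.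
Proof. by apply: (@complexI R); rewrite fmorphV /= !cmodC normfV. Qed.

Lemma cmodX a n : cmod (a ^+ n) = cmod a ^+ n.
Proof. by apply: (@complexI R); rewrite rmorphXn /= !cmodC normrX. Qed.

Lemma cmodN a : cmod (- a) = cmod a.
Proof. by apply: (@complexI R); rewrite !cmodC normrN. Qed.

Lemma cmodD a b : cmod (a + b) <= cmod a + cmod b.
Proof. by rewrite -lecR rmorphD /= !cmodC ler_normD. Qed.

Lemma cmod_nat n : cmod (n%:R : C) = n%:R.
Proof. by apply: (@complexI R); rewrite cmodC normr_nat rmorph_nat. Qed.

Lemma cmod_sqr a : cmod a ^+ 2 = complex.Re a ^+ 2 + complex.Im a ^+ 2.
Proof. by rewrite /cmod normc_def /= sqr_sqrtr // addr_ge0 // sqr_ge0. Qed.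

Lemma cmod_dist a b : `|cmod a - cmod b| <= cmod (a - b).
Proof.
have h1 := cmodD (a - b) b; have h2 := cmodD (b - a) a.
rewrite !subrK -[cmod (b - a)]cmodN opprB in h1 h2.
by rewrite ler_norml; apply/andP; split; lra.
Qed.

(* Cubes of points of the open unit disc avoid the poles 1 and 2 of the
   Weierstrass step written in the ratio t (see wstep_ratio). *)
Lemma cube_in_disc (t : C) : cmod t < 1 ->
  [/\ cmod (t ^+ 3) < 1, t ^+ 3 != 1 & t ^+ 3 != 2].
Proof.
move=> ht; have hs : cmod (t ^+ 3) < 1 by rewrite cmodX exprn_ilt1 ?cmod_ge0.
split => //; apply: contraTneq hs => ->; first by rewrite (cmod_nat 1) ltxx.
by rewrite (cmod_nat 2) ltrn1.
Qed.

(* The Blaschke factor s |-> (1 - 2s)/(2 - s) maps the closed unit disc into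
   itself, contracting uniformly away from the boundary; the key identity is
   |2 - s|^2 - |1 - 2s|^2 = 3 (1 - |s|^2). *)
Lemma blaschke_bound (s : C) : cmod s <= 1 ->
  cmod ((1 - 2 * s) / (2 - s)) <= 1 - (1 - cmod s ^+ 2) / 6.
Proof.
move=> hs; set d := 1 - cmod s ^+ 2.
have s0 := cmod_ge0 s.
have hd : 0 <= d <= 1 by rewrite /d; apply/andP; split; nra.
have ident : cmod (1 - 2 * s) ^+ 2 = cmod (2 - s) ^+ 2 - 3 * d.
  rewrite /d !cmod_sqr; case: s {hs s0 hd d} => a b /=; simpc; ring.
have Y1 : 1 <= cmod (2 - s).
  have := cmodD (2 - s) s; rewrite subrK (cmod_nat 2); lra.
have Y3 : cmod (2 - s) <= 3.
  have := cmodD 2 (- s); rewrite cmodN (cmod_nat 2); lra.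
rewrite cmodM cmodV ler_pdivrMr; last lra.
rewrite -ler_sqr ?nnegrE ?cmod_ge0 //; last by apply: mulr_ge0; lra.
rewrite ident; set Y := cmod (2 - s).
have h9 : 0 <= d * (9 - Y ^+ 2) by apply: mulr_ge0; nra.
have hdY : 0 <= (d * Y) ^+ 2 by exact: sqr_ge0.
nra.
Qed.

End ComplexModulus.

Section NormFacts.
Variables (R : realType) (d : nat) (N : 'rV[R[i]]_d -> R).
Hypothesis hN : is_norm N.

Lemma normZ a v : N (a *: v) = cmod a * N v.
Proof. by case: hN. Qed.

Lemma norm0 : N 0 = 0.
Proof. by rewrite -(scale0r (0 : 'rV_d)) normZ (cmod_nat _ 0) mul0r. Qed.

Lemma normN v : N (- v) = N v.
Proof. by rewrite -scaleN1r normZ cmodN (cmod_nat _ 1) mul1r. Qed.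

Lemma norm_gt0 v : v != 0 -> 0 < N v.
Proof.
move=> v0; case: hN => h0 _ hD; have := hD v (- v); rewrite subrr norm0 normN.
rewrite lt_def => h; apply/andP; split; last lra.
by apply: contraNneq v0 => /h0/eqP.
Qed.

Lemma norm_dist v v' : `|N v - N v'| <= N (v - v').
Proof.
case: hN => _ _ hD; have h1 := hD (v - v') v'; have h2 := hD (v' - v) v.
rewrite !subrK -[N (v' - v)]normN opprB in h1 h2.
by rewrite ler_norml; apply/andP; split; lra.
Qed.

End NormFacts.

Section Orbit.
Variable R : realType.
Local Notation C := R[i].
Variables (w u0 v0 : C).
Hypothesis hw : w ^+ 2 + w + 1 = 0.
Hypothesis hdom : cmod v0 < cmod u0.

Fact three_neq0 : (3 : C) != 0.
Proof. by rewrite pnatr_eq0. Qed.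

Fact u0_neq0 : u0 != 0.
Proof. by rewrite -cmod_eq0 gt_eqF // (le_lt_trans (cmod_ge0 _) hdom). Qed.

Definition orbit n : C * C := iter n (@wstep _) (u0, v0).
Definition tratio n : C := (orbit n).2 / (orbit n).1.

(* rho = |t_0| < 1 bounds every |t_n|; kappa < 1 is a uniform contraction rate. *)
Definition rho : R := cmod (v0 / u0).
Definition kappa : R := 1 - (1 - rho ^+ 6) / 6.

Fact rho_ge0 : 0 <= rho. Proof. exact: cmod_ge0. Qed.

Fact rho_lt1 : rho < 1.
Proof.
have u0pos : 0 < cmod u0 by rewrite lt_def cmod_eq0 u0_neq0 cmod_ge0.
by rewrite /rho cmodM cmodV ltr_pdivrMr // mul1r.
Qed.

Fact kappa_bounds : 0 < kappa /\ kappa < 1.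
Proof.
have r6 : 0 <= rho ^+ 6 := exprn_ge0 6 rho_ge0.
have r61 : rho ^+ 6 < 1 by rewrite exprn_ilt1 ?rho_ge0 ?rho_lt1.
by rewrite /kappa; split; lra.
Qed.

Lemma wstep_contract (p : C * C) : p.1 != 0 -> cmod (p.2 / p.1) <= rho ->
  (wstep p).1 != 0 /\ cmod ((wstep p).2 / (wstep p).1) <= kappa * cmod (p.2 / p.1).
Proof.
case: p => u v /= hu ht; set t := v / u in ht *; set s := t ^+ 3.
have [hs1 s1 s2] := cube_in_disc (le_lt_trans ht rho_lt1).
have hs : cmod s <= rho ^+ 3 by rewrite cmodX lerXn2r ?nnegrE ?rho_ge0 ?cmod_ge0.
have [fE tE] := wstep_ratio three_neq0 hu s1 s2.
have s1' : 1 - s != 0 by rewrite subr_eq0 eq_sym.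
have s2' : 2 - s != 0 by rewrite subr_eq0 eq_sym.
split; first by rewrite /= fE !mulf_neq0 // invr_eq0 mulf_neq0 // three_neq0.
rewrite tE cmodM mulrC ler_wpM2r ?cmod_ge0 //; apply: le_trans (blaschke_bound (ltW hs1)) _.
have : cmod s ^+ 2 <= rho ^+ 6.
  by rewrite (_ : 6 = 3 * 2)%N // exprM lerXn2r ?nnegrE ?exprn_ge0 ?rho_ge0 ?cmod_ge0.
by rewrite /kappa; lra.
Qed.

Lemma orbit_invariant n : (orbit n).1 != 0 /\ cmod (tratio n) <= rho.
Proof.
elim: n => [|n [hu ht]]; first by split; [exact: u0_neq0 | rewrite /tratio /=].
have [hu' ht'] := wstep_contract hu ht; split => //.
apply: le_trans ht' (le_trans _ ht); rewrite ler_piMl ?cmod_ge0 //.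
by have [] := kappa_bounds; lra.
Qed.

Lemma tratio_cvg0 : (fun n => cmod (tratio n)) @ \oo --> 0.
Proof.
have [k0 k1] := kappa_bounds.
apply: (@geometric_decay _ _ kappa 0) => // [n|n _]; first exact: cmod_ge0.
by have [hu ht] := orbit_invariant n; have [] := wstep_contract hu ht.
Qed.

(* Hence u_n^3 <> v_n^3: every Weierstrass step along the orbit is defined. *)
Lemma orbit_cubes_neq n : (orbit n).1 ^+ 3 != (orbit n).2 ^+ 3.
Proof.
have [hu ht] := orbit_invariant n; apply: contraTneq (le_lt_trans ht rho_lt1) => e.
rewrite -leNgt /tratio -(ler_pXn2r (_ : (0 < 3)%N)) ?nnegrE ?cmod_ge0 //.
by rewrite -cmodX expr_div_n -e divff ?expf_neq0 // (cmod_nat _ 1) expr1n.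
Qed.

Definition orbit_point n : 'rV[C]_3 := cubic_vec w (orbit n).1 (orbit n).2.

Lemma weierstrass_iter_orbit n :
  weierstrass_iter ('X^3 : {poly C}) n (cubic_vec w u0 v0) = Some (orbit_point n).
Proof.
elim: n => [|n IH] //=.
by rewrite IH /orbit_point weierstrass_cubic_vec ?three_neq0 ?orbit_cubes_neq.
Qed.

Lemma orbit_point_neq0 n : orbit_point n != 0.
Proof.
have [hu _] := orbit_invariant n.
by apply: contra_neq hu => /(cubic_vec_eq0 hw three_neq0).
Qed.

Lemma orbit_point_scale n : orbit_point n = (orbit n).1 *: cubic_vec w 1 (tratio n).
Proof.
have [hu _] := orbit_invariant n.
by rewrite -cubic_vec_scale mulr1 /tratio mulrC divfK.
Qed.

(* The factor by which one step multiplies the first coordinate; it tends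
   to 2/3 because the ratio t tends to 0. *)
Definition lam n : C := wfactor (orbit n).1 (orbit n).2.

Lemma lam_cvg : (fun n => cmod (lam n)) @ \oo --> (2 / 3 : R).
Proof.
apply: (@cvg_dominated _ _ _ _ (3 * (1 - rho))^-1 _ tratio_cvg0) => n.
have [hu ht] := orbit_invariant n; have r1 := rho_lt1.
set t := tratio n in ht *; set s := t ^+ 3.
have t0 := cmod_ge0 t.
have [hs1 s1 s2] := cube_in_disc (le_lt_trans ht r1).
have hs : cmod s <= cmod t by rewrite cmodX -[leRHS]expr1 ler_wiXn2l // (le_trans ht (ltW r1)).
have [lE _] := wstep_ratio three_neq0 hu s1 s2.
have c23 : (2 / 3 : R) = cmod (2 / 3 : C) by rewrite cmodM cmodV !cmod_nat.
have e : lam n - 2 / 3 = s / (3 * (1 - s)).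
  by rewrite /lam lE -/s; field; rewrite subr_eq0 eq_sym.
have d1 : 1 - rho <= cmod (1 - s).
  have := cmodD (1 - s) s; rewrite subrK (cmod_nat _ 1); lra.
rewrite c23; apply: le_trans (cmod_dist _ _) _.
rewrite e (cmodM s) cmodV (cmodM 3) (cmod_nat _ 3) mulrC.
apply: ler_pM; rewrite ?invr_ge0 ?cmod_ge0 //; first by apply: mulr_ge0; lra.
by rewrite lef_pV2 ?posrE ?ler_pM2l //; apply: mulr_gt0; lra.
Qed.

Section OrbitNorms.
Variable N : 'rV[C]_3 -> R.
Hypothesis hN : is_norm N.

Lemma normalised_point_cvg :
  (fun n => N (cubic_vec w 1 (tratio n))) @ \oo --> N (cubic_vec w 1 0).
Proof.
apply: (@cvg_dominated _ _ _ _ (N (cubic_vec w 0 1)) _ tratio_cvg0) => n.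
apply: le_trans (norm_dist hN _ _) _; rewrite cubic_vec_sub subrr subr0.
have -> : cubic_vec w 0 (tratio n) = tratio n *: cubic_vec w 0 1.
  by rewrite -cubic_vec_scale mulr0 mulr1.
by rewrite (normZ hN) mulrC.
Qed.

(* Successive norms: N(W_{n+1})/N(W_n) = |lam n| N(X_{n+1})/N(X_n) for the
   normalised points X_n, and both factors converge. *)
Lemma norm_ratio_cvg :
  (fun n => N (orbit_point n.+1) / N (orbit_point n)) @ \oo --> (2 / 3 : R).
Proof.
have X0 t : N (cubic_vec w 1 t) != 0.
  rewrite gt_eqF // (norm_gt0 hN) //.
  by apply: contra_neq (oner_neq0 C) => /(cubic_vec_eq0 hw three_neq0).
have A0 := X0 0.
have eq_ratio n : N (orbit_point n.+1) / N (orbit_point n) =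
    cmod (lam n) * N (cubic_vec w 1 (tratio n.+1)) * (N (cubic_vec w 1 (tratio n)))^-1.
  have [hu _] := orbit_invariant n.
  rewrite !orbit_point_scale !(normZ hN) (_ : (orbit n.+1).1 = (orbit n).1 * lam n) // cmodM.
  by field; rewrite X0 cmod_eq0 hu.
rewrite (funext eq_ratio) -(mulfK A0 (2 / 3)).
apply: cvgM; first apply: cvgM; first exact: lam_cvg.
- by have := normalised_point_cvg; rewrite -cvg_shiftS.
- exact: cvgV A0 normalised_point_cvg.
Qed.

(* Ratio test: the norms are eventually contracted by 5/6, so they tend to 0. *)
Lemma norm_orbit_cvg0 : (fun n => N (orbit_point n)) @ \oo --> 0.
Proof.
have lt56 : (2 / 3 : R) < 5 / 6 by lra.
have [M _ hM] := cvgr_lt _ norm_ratio_cvg _ lt56.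
apply: (@geometric_decay _ _ (5 / 6) M) => // [|n|n Mn]; first lra.
  exact/ltW/(norm_gt0 hN)/orbit_point_neq0.
have := hM n Mn; rewrite /= ltr_pdivrMr ?(norm_gt0 hN) ?orbit_point_neq0 //.
exact: ltW.
Qed.

End OrbitNorms.

Lemma orbit_conclusion : exists W : nat -> 'rV[C]_3,
  (forall n, weierstrass_iter ('X^3 : {poly C}) n (cubic_vec w u0 v0) = Some (W n)) /\
  (forall n, W n != 0) /\
  (forall N : 'rV[C]_3 -> R, is_norm N ->
     seq_cvg (fun n => N (W n)) 0 /\ seq_cvg (fun n => N (W n.+1) / N (W n)) (2 / 3)).
Proof.
exists orbit_point; split; first exact: weierstrass_iter_orbit.
split; first exact: orbit_point_neq0.
by move=> N hN; rewrite !seq_cvgP; split; [exact: norm_orbit_cvg0 | exact: norm_ratio_cvg].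
Qed.

End Orbit.

Section RealMultiple.
Variable R : realType.
Local Notation C := R[i].

(* If w has conjugate w^2 and |u| = |v|, the point with coordinates
   u w^k + v w^(2k) is a complex multiple of a real vector: choosing c with
   c^2 = u v gives v/c = conj (u/c), so each coordinate is c * 2 Re(u/c w^k). *)
Lemma cubic_vec_real_multiple (w u v : C) : (w^*)%C = w ^+ 2 -> cmod u = cmod v ->
  exists (c : C) (r : 'rV[R]_3), cubic_vec w u v = c *: map_mx (real_complex R) r.
Proof.
move=> hconj huv.
have [u0|u0] := eqVneq u 0.
  have v0 : v = 0 by apply/eqP; rewrite -cmod_eq0 -huv cmod_eq0 u0.
  exists 0, 0; rewrite u0 v0 scale0r.
  by apply/rowP => k; rewrite !mxE /cubic_coord !mul0r addr0.
have v0 : v != 0 by rewrite -cmod_eq0 -huv cmod_eq0.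
pose c := sqrtc (u * v).
have c2 : c ^+ 2 = u * v := sqr_sqrtc _.
have c0 : c != 0 by apply: contra_neq (mulf_neq0 u0 v0) => c0; rewrite -c2 c0 expr0n.
have cJ0 : (c^*)%C != 0 by rewrite conjc_eq0.
have normJ (x : C) : x * (x^*)%C = ((cmod x ^+ 2)%:C)%C.
  by rewrite -normCK -cmodC rmorphXn.
have ccJ : c * (c^*)%C = u * (u^*)%C.
  by rewrite !normJ -cmodX c2 cmodM huv expr2.
have v_eq : v = c * (u^*)%C / (c^*)%C.
  apply: (mulIf cJ0); rewrite divfK //; apply: (mulfI c0).
  rewrite mulrCA ccJ; transitivity (c ^+ 2 * (u^*)%C); last by ring.
  by rewrite c2; ring.
exists c, (\row_k (2 * complex.Re (u / c * w ^+ k))).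
apply/rowP => k; rewrite !mxE /cubic_coord rmorphM /= rmorph_nat.
have wJ : ((u / c * w ^+ k)^*)%C = (u^*)%C / (c^*)%C * w ^+ (2 * k).
  by rewrite !rmorphM /= conjc_inv rmorphXn /= hconj exprM.
by rewrite -addcJ wJ v_eq; field; rewrite c0 andbT; exact: cJ0.
Qed.

End RealMultiple.

Section Omega.
Variable R : realType.

Definition omega : R[i] := Complex (- (1 / 2)) (Num.sqrt 3 / 2).

Fact sqrt3_sqr : Num.sqrt (3 : R) ^+ 2 = 3.
Proof. by rewrite sqr_sqrtr // ler0n. Qed.

Lemma omega_root : omega ^+ 2 + omega + 1 = 0.
Proof.
have := sqrt3_sqr; rewrite !expr2 /omega => h; simpc.
by apply/eqP; rewrite eq_complex /=; apply/andP; split; apply/eqP; nra.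
Qed.

Lemma omega_conj : (omega^*)%C = omega ^+ 2.
Proof.
have := sqrt3_sqr; rewrite !expr2 /omega => h; simpc.
by apply/eqP; rewrite eq_complex /=; apply/andP; split; apply/eqP; nra.
Qed.

End Omega.

Theorem theorem3p8 (R : realType) (z : 'rV[R[i]]_3) :
  z 0 0 + z 0 1 + z 0 2 = 0 ->
  ~ (exists (c : R[i]) (v : 'rV[R]_3), z = c *: map_mx (real_complex R) v) ->
  exists w : nat -> 'rV[R[i]]_3,
    (forall n : nat, weierstrass_iter ('X^3 : {poly R[i]}) n z = Some (w n)) /\
    (forall n : nat, w n != 0) /\
    (forall N : 'rV[R[i]]_3 -> R, is_norm N ->
       seq_cvg (fun n => N (w n)) 0 /\
       seq_cvg (fun n => N (w n.+1) / N (w n)) (2 / 3)).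
Proof.
move=> hH not_real.
have hw := omega_root R; have h3 : (3 : R[i]) != 0 by rewrite pnatr_eq0.
have := cubic_vec_decomp hw h3 hH.
set u := (_ + _ * omega R ^+ 2 + _) / 3; set v := (_ + _ * omega R + _) / 3.
move=> hz; rewrite hz in not_real *.
have [hvu|huv|huv] := ltgtP (cmod v) (cmod u).
- exact: orbit_conclusion hw hvu.
- by rewrite cubic_vec_swap //; exact: orbit_conclusion (cube_root_sqr hw) huv.
- by case: not_real; exact: cubic_vec_real_multiple (omega_conj R) (esym huv).
Qed.
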